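(* Let $N=2$, $\alpha>1$, and $H_\alpha=\frac{1}{\alpha}\begin{pmatrix}1&\alpha-1\\1&\alpha-1\end{pmatrix}$. Then $$\tau_t(H_\alpha)\longrightarrow\frac{\alpha^2}{2+2(\alpha-1)^2}\qquad\text{as }t\to\infty.$$
   Context: Let $X$ be a square-integrable real random variable with $\mathbb E X=\theta$ and $\mathrm{Var}(X)=\sigma^2>0$. Let $N=2$. For $i\in\{1,2\}$ and $t\geq 1$ let $X_t^{(i)}$ be random variables distributed as $X$, mutually independent over both $i$ and $t$, and write $\mathbf X_t=(X_t^{(1)},X_t^{(2)})^\top$. For a $2\times2$ stochastic matrix $A$ define $\hat{\boldsymbol\theta}_1=\mathbf X_1$ and $\hat{\boldsymbol\theta}_{t+1}=\frac{t}{t+1}A\hat{\boldsymbol\theta}_t+\frac{1}{t+1}\mathbf X_{t+1}$ for $t\geq 1$. Let $\bar{\mathbb X}_{2t}=\frac{1}{2t}\sum_{i=1}^2\sum_{k=1}^t X_k^{(i)}$, $\mathbf 1=(1,1)^\top$, $\|\cdot\|$ the Euclidean norm, and $\tau_t(A)=\dfrac{\mathbb E\|(\bar{\mathbb X}_{2t}-\theta)\mathbf 1\|^2}{\mathbb E\|\hat{\boldsymbol\theta}_t-\theta\mathbf 1\|^2}$. *)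

From Stdlib Require Import Reals Lra.
Open Scope R_scope.

(* A 2x2 real matrix, indices 0 and 1. *)
Definition mat2 := nat -> nat -> R.

Definition stochastic (A : mat2) : Prop :=
  (forall i j, (i < 2)%nat -> (j < 2)%nat -> 0 <= A i j) /\
  (forall i, (i < 2)%nat -> A i 0%nat + A i 1%nat = 1).

Definition H (alpha : R) : mat2 :=
  fun i j => if Nat.eqb j 0 then 1 / alpha else (alpha - 1) / alpha.

(* Random variables on a sample space Om; X t i is X_t^{(i+1)} (t >= 1, i in {0,1}). *)
Section Est.
Variable Om : Type.
Variable X : nat -> nat -> Om -> R.
Variable A : mat2.

(* hat n = \hat\theta_{n+1} (a pair, given as a function of the component index). *)
Fixpoint hat (n : nat) : nat -> Om -> R :=
  match n with
  | O => fun i w => X 1%nat i w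
  | S m => fun i w =>
      INR (S m) / INR (S (S m)) * (A i 0%nat * hat m 0%nat w + A i 1%nat * hat m 1%nat w)
      + 1 / INR (S (S m)) * X (S (S m)) i w
  end.

Definition theta_hat (t : nat) : nat -> Om -> R := hat (t - 1).

Definition Xbar (t : nat) (w : Om) : R :=
  / (2 * INR t) * sum_f_R0 (fun k => X (S k) 0%nat w + X (S k) 1%nat w) (t - 1).
End Est.

(* tau_t(A) = E||(Xbar_{2t} - theta) 1||^2 / E||theta_hat_t - theta 1||^2 *)
Definition tau (Om : Type) (E : (Om -> R) -> R) (X : nat -> nat -> Om -> R)
  (theta : R) (A : mat2) (t : nat) : R :=
  E (fun w => (Xbar Om X t w - theta) ^ 2 + (Xbar Om X t w - theta) ^ 2) /
  E (fun w => (theta_hat Om X A t 0%nat w - theta) ^ 2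
            + (theta_hat Om X A t 1%nat w - theta) ^ 2).

From Stdlib Require Import Reals Lra Lia FunctionalExtensionality.
From Coquelicot Require Import Coquelicot.
Open Scope R_scope.

(* Both rows of [H alpha] equal the weight vector [(1/alpha, (alpha-1)/alpha)], so
   after one step every coordinate of the estimator is the running weighted
   average of all earlier observations plus the current own observation, divided
   by [t].  With [q] the squared norm of that weight vector, uncorrelatedness
   gives [E||theta_hat_t - theta 1||^2 = 2 ((t-1) q + 1) sigma^2 / t^2], while
   [E||(Xbar_2t - theta) 1||^2 = sigma^2 / t], so [tau_t = t / (2 (t-1) q + 2)],
   which tends to [1 / (2 q) = alpha^2 / (2 + 2 (alpha-1)^2)]. *)

Section Estimators.
Variable Om : Type.
Variable X : nat -> nat -> Om -> R.
Variable theta : R.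

Definition centered k i (w : Om) := X k i w - theta.

Definition weighted_noise a b k (w : Om) := a * centered k 0 w + b * centered k 1 w.

(* Sum over the observation times [1 .. m+1]. *)
Definition noise_sum a b m (w : Om) :=
  sum_f_R0 (fun k => weighted_noise a b (S k) w) m.

Lemma Xbar_sub n w :
  Xbar Om X (S n) w - theta = noise_sum 1 1 n w / (2 * INR (S n)).
Proof.
  unfold Xbar; replace (S n - 1)%nat with n by lia.
  assert (sum_obs : sum_f_R0 (fun k => X (S k) 0%nat w + X (S k) 1%nat w) n
                    = noise_sum 1 1 n w + 2 * INR (S n) * theta).
  { unfold noise_sum, weighted_noise, centered.
    induction n as [|n IH]; cbn [sum_f_R0]; [simpl; ring|].
    rewrite IH, (S_INR (S n)); ring. }
  rewrite sum_obs; field.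
  apply not_0_INR; lia.
Qed.

Section RowH.
Variable alpha : R.

Lemma hat_H_succ m i w :
  hat Om X (H alpha) (S m) i w
  = INR (S m) / INR (S (S m))
      * (1 / alpha * hat Om X (H alpha) m 0 w + (alpha - 1) / alpha * hat Om X (H alpha) m 1 w)
    + 1 / INR (S (S m)) * X (S (S m)) i w.
Proof. reflexivity. Qed.

Hypothesis alpha_pos : 0 < alpha.

Lemma H_row_hat_sub m w :
  1 / alpha * hat Om X (H alpha) m 0 w + (alpha - 1) / alpha * hat Om X (H alpha) m 1 w - theta
  = noise_sum (1 / alpha) ((alpha - 1) / alpha) m w / INR (S m).
Proof.
  induction m as [|m IH].
  - unfold noise_sum, weighted_noise, centered; simpl; field; lra.
  - rewrite !hat_H_succ; unfold noise_sum in *; cbn [sum_f_R0].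
    set (avg := 1 / alpha * hat Om X (H alpha) m 0 w
                + (alpha - 1) / alpha * hat Om X (H alpha) m 1 w) in *.
    set (F := sum_f_R0 _ m) in *.
    assert (m_pos : 0 < INR (S m)) by (apply lt_0_INR; lia).
    replace avg with (theta + F / INR (S m)) by lra.
    unfold weighted_noise, centered; rewrite (S_INR (S m)); field; lra.
Qed.

Lemma hat_H_sub m i w :
  hat Om X (H alpha) (S m) i w - theta
  = (noise_sum (1 / alpha) ((alpha - 1) / alpha) m w + centered (S (S m)) i w)
    / INR (S (S m)).
Proof.
  rewrite hat_H_succ.
  pose proof (H_row_hat_sub m w) as row.
  assert (m_pos : 0 < INR (S m)) by (apply lt_0_INR; lia).
  replace (1 / alpha * hat Om X (H alpha) m 0 w + (alpha - 1) / alpha * hat Om X (H alpha) m 1 w)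
    with (theta + noise_sum (1 / alpha) ((alpha - 1) / alpha) m w / INR (S m)) by lra.
  unfold centered; rewrite (S_INR (S m)); field; lra.
Qed.

End RowH.

Variable E : (Om -> R) -> R.
Variable sigma : R.
Hypothesis E_add : forall f g, E (fun w => f w + g w) = E f + E g.
Hypothesis E_scal : forall (c : R) f, E (fun w => c * f w) = c * E f.
Hypothesis E_centered_sq : forall k i, (1 <= k)%nat -> (i < 2)%nat ->
  E (fun w => (X k i w - theta) ^ 2) = sigma ^ 2.
Hypothesis E_centered_mul : forall k i l j,
  (1 <= k)%nat -> (1 <= l)%nat -> (i < 2)%nat -> (j < 2)%nat -> (k <> l \/ i <> j) ->
  E (fun w => (X k i w - theta) * (X l j w - theta)) = 0.

Lemma E_ext f g : (forall w, f w = g w) -> E f = E g.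
Proof. intro fg; f_equal; apply functional_extensionality; exact fg. Qed.

Lemma E_lin2 a b f g : E (fun w => a * f w + b * g w) = a * E f + b * E g.
Proof. rewrite (E_add (fun w => a * f w) (fun w => b * g w)), !E_scal; reflexivity. Qed.

Lemma E_lin3 a b c f g h :
  E (fun w => a * f w + b * g w + c * h w) = a * E f + b * E g + c * E h.
Proof. rewrite (E_add (fun w => a * f w + b * g w) (fun w => c * h w)), E_lin2, E_scal; reflexivity. Qed.

Lemma E_lin4 a b c d f g h k :
  E (fun w => a * f w + b * g w + c * h w + d * k w) = a * E f + b * E g + c * E h + d * E k.
Proof. rewrite (E_add (fun w => a * f w + b * g w + c * h w) (fun w => d * k w)), E_lin3, E_scal; reflexivity. Qed.

Lemma E_weighted_noise_mul a b c d k l : (1 <= k)%nat -> (1 <= l)%nat ->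
  E (fun w => weighted_noise a b k w * weighted_noise c d l w)
  = if Nat.eq_dec k l then (a * c + b * d) * sigma ^ 2 else 0.
Proof.
  intros k_ge1 l_ge1.
  rewrite (E_ext _ (fun w => (a * c) * ((X k 0 w - theta) * (X l 0 w - theta))
     + (a * d) * ((X k 0 w - theta) * (X l 1 w - theta))
     + (b * c) * ((X k 1 w - theta) * (X l 0 w - theta))
     + (b * d) * ((X k 1 w - theta) * (X l 1 w - theta))))
    by (intro; unfold weighted_noise, centered; ring).
  rewrite E_lin4.
  destruct (Nat.eq_dec k l) as [<-|k_ne_l].
  - rewrite (E_centered_mul k 0 k 1), (E_centered_mul k 1 k 0) by (auto; lia).
    rewrite !(E_ext (fun w => (X k _ w - theta) * (X k _ w - theta)) (fun w => (X k _ w - theta) ^ 2))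
      by (intro; ring).
    rewrite !E_centered_sq by lia; ring.
  - rewrite !E_centered_mul by (auto; lia); ring.
Qed.

Lemma E_noise_sum_mul_weighted_noise a b c d m j : (m + 2 <= j)%nat ->
  E (fun w => noise_sum a b m w * weighted_noise c d j w) = 0.
Proof.
  induction m as [|m IH]; intro j_late.
  - unfold noise_sum; simpl.
    rewrite E_weighted_noise_mul by lia.
    destruct (Nat.eq_dec 1 j); [lia|reflexivity].
  - rewrite (E_ext _ (fun w => 1 * (noise_sum a b m w * weighted_noise c d j w)
       + 1 * (weighted_noise a b (S (S m)) w * weighted_noise c d j w)))
      by (intro; unfold noise_sum; simpl; ring).
    rewrite E_lin2, IH, E_weighted_noise_mul by lia.
    destruct (Nat.eq_dec (S (S m)) j); [lia|ring].
Qed.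

Lemma E_noise_sum_sq a b m :
  E (fun w => noise_sum a b m w ^ 2) = INR (S m) * (a * a + b * b) * sigma ^ 2.
Proof.
  induction m as [|m IH].
  - unfold noise_sum; simpl.
    rewrite (E_ext _ (fun w => weighted_noise a b 1 w * weighted_noise a b 1 w)) by (intro; ring).
    rewrite E_weighted_noise_mul by lia.
    destruct (Nat.eq_dec 1 1); [ring|lia].
  - rewrite (E_ext _ (fun w => 1 * noise_sum a b m w ^ 2
       + 2 * (noise_sum a b m w * weighted_noise a b (S (S m)) w)
       + 1 * (weighted_noise a b (S (S m)) w * weighted_noise a b (S (S m)) w)))
      by (intro; unfold noise_sum; simpl; ring).
    rewrite E_lin3, IH, E_noise_sum_mul_weighted_noise, E_weighted_noise_mul by lia.
    destruct (Nat.eq_dec (S (S m)) (S (S m))); [|lia].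
    rewrite (S_INR (S m)); ring.
Qed.

Lemma E_sq_err_Xbar n :
  E (fun w => (Xbar Om X (S n) w - theta) ^ 2 + (Xbar Om X (S n) w - theta) ^ 2)
  = sigma ^ 2 / INR (S n).
Proof.
  assert (n_pos : 0 < INR (S n)) by (apply lt_0_INR; lia).
  rewrite (E_ext _ (fun w => (2 / (2 * INR (S n)) ^ 2) * noise_sum 1 1 n w ^ 2))
    by (intro; rewrite Xbar_sub; field; lra).
  rewrite E_scal, E_noise_sum_sq; field; lra.
Qed.

Definition sqnorm_H_row alpha := (1 / alpha) ^ 2 + ((alpha - 1) / alpha) ^ 2.

Lemma E_sq_err_hat_H alpha m : 0 < alpha ->
  E (fun w => (theta_hat Om X (H alpha) (S (S m)) 0 w - theta) ^ 2
            + (theta_hat Om X (H alpha) (S (S m)) 1 w - theta) ^ 2)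
  = 2 * (INR (S m) * sqnorm_H_row alpha + 1) * sigma ^ 2 / INR (S (S m)) ^ 2.
Proof.
  intro alpha_pos.
  set (F := noise_sum (1 / alpha) ((alpha - 1) / alpha) m).
  set (t := INR (S (S m))).
  assert (t_pos : 0 < t) by (apply lt_0_INR; lia).
  change (theta_hat Om X (H alpha) (S (S m))) with (hat Om X (H alpha) (S m)).
  (* each own observation [centered t i] is the weighted noise with weights (1, 0) or (0, 1) *)
  rewrite (E_ext _ (fun w => (2 / t ^ 2) * F w ^ 2
        + (2 / t ^ 2) * (F w * weighted_noise 1 1 (S (S m)) w)
        + (1 / t ^ 2) * (weighted_noise 1 0 (S (S m)) w * weighted_noise 1 0 (S (S m)) w)
        + (1 / t ^ 2) * (weighted_noise 0 1 (S (S m)) w * weighted_noise 0 1 (S (S m)) w))).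
  2:{ intro w; rewrite !hat_H_sub by lra; fold F t; unfold weighted_noise; field; lra. }
  rewrite E_lin4; unfold F.
  rewrite E_noise_sum_sq, E_noise_sum_mul_weighted_noise, !E_weighted_noise_mul by lia.
  destruct (Nat.eq_dec (S (S m)) (S (S m))); [|lia].
  unfold sqnorm_H_row; field; lra.
Qed.

Hypothesis sigma_pos : 0 < sigma.

Lemma tau_H alpha m : 0 < alpha ->
  tau Om E X theta (H alpha) (S (S m))
  = (INR m + 2) / (2 * sqnorm_H_row alpha * INR m + (2 * sqnorm_H_row alpha + 2)).
Proof.
  intro alpha_pos; unfold tau.
  rewrite E_sq_err_Xbar, E_sq_err_hat_H by exact alpha_pos.
  assert (q_pos : 0 < sqnorm_H_row alpha).
  { unfold sqnorm_H_row; assert (0 < 1 / alpha) by (apply Rdiv_lt_0_compat; lra); nra. }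
  assert (0 < INR m + 1) by (pose proof (pos_INR m); lra).
  rewrite !S_INR; field; repeat split; nra.
Qed.

End Estimators.

Lemma is_lim_seq_INR_ratio p c d : 0 < p -> 0 < d ->
  is_lim_seq (fun m => (INR m + c) / (p * INR m + d)) (1 / p).
Proof.
  intros p_pos d_pos.
  assert (inv_to_0 : is_lim_seq (fun m => / INR (S m)) 0).
  { apply (is_lim_seq_incr_1 (fun m => / INR m) 0).
    exact (is_lim_seq_inv INR p_infty is_lim_seq_INR ltac:(discriminate)). }
  (* divide through by [m + 1] rather than [m] to avoid [m = 0] *)
  apply is_lim_seq_ext with
    (u := fun m => (1 + (c - 1) * / INR (S m)) / (p + (d - p) * / INR (S m))).
  { intro m; pose proof (pos_INR m).
    assert (m_pos : 0 < INR (S m)) by (apply lt_0_INR; lia).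
    rewrite S_INR in *; field; split; nra. }
  replace (1 / p) with ((1 + (c - 1) * 0) / (p + (d - p) * 0)) by (field; lra).
  apply is_lim_seq_div'; [| | lra];
    apply is_lim_seq_plus'; try apply is_lim_seq_const;
    exact (is_lim_seq_scal_l _ _ 0 inv_to_0).
Qed.

Theorem mainTheorem7 :
  forall (Om : Type) (E : (Om -> R) -> R) (X : nat -> nat -> Om -> R)
         (theta sigma alpha : R),
    (* E is a linear expectation functional *)
    (forall f g, E (fun w => f w + g w) = E f + E g) ->
    (forall (c : R) f, E (fun w => c * f w) = c * E f) ->
    (* each X_t^{(i)} has mean theta and variance sigma^2 > 0 *)
    0 < sigma ->
    (forall k i, (1 <= k)%nat -> (i < 2)%nat -> E (X k i) = theta) ->
    (forall k i, (1 <= k)%nat -> (i < 2)%nat ->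
       E (fun w => (X k i w - theta) ^ 2) = sigma ^ 2) ->
    (* pairwise independence (used only through uncorrelatedness) *)
    (forall k i l j, (1 <= k)%nat -> (1 <= l)%nat -> (i < 2)%nat -> (j < 2)%nat ->
       (k <> l \/ i <> j) ->
       E (fun w => (X k i w - theta) * (X l j w - theta)) = 0) ->
    1 < alpha ->
    Un_cv (fun n => tau Om E X theta (H alpha) (S n))
          (alpha ^ 2 / (2 + 2 * (alpha - 1) ^ 2)).
Proof.
  intros Om E X theta sigma alpha E_add E_scal sigma_pos _ E_sq E_mul alpha_gt1.
  set (q := sqnorm_H_row alpha).
  assert (q_pos : 0 < q).
  { unfold q, sqnorm_H_row; assert (0 < 1 / alpha) by (apply Rdiv_lt_0_compat; lra); nra. }
  apply is_lim_seq_Reals, is_lim_seq_incr_1.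
  replace (alpha ^ 2 / (2 + 2 * (alpha - 1) ^ 2)) with (1 / (2 * q))
    by (unfold q, sqnorm_H_row; field; repeat split; nra).
  apply is_lim_seq_ext with (u := fun m => (INR m + 2) / (2 * q * INR m + (2 * q + 2))).
  - intro m; symmetry; apply (tau_H Om X theta E sigma); auto; lra.
  - apply is_lim_seq_INR_ratio; lra.
Qed.
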